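(* Let $H$ be a Hermitian operator on a finite-dimensional Hilbert space $\mathcal H_S$, $\beta>0$, $Z(\beta)=\operatorname{tr}e^{-\beta H}$, $\rho_\beta=e^{-\beta H}/Z(\beta)$, and let $U_\theta$ be a (local) unitary on $\mathcal H_S$. Define $\Delta H=U_\theta^\dagger HU_\theta-H$ and, for real $t$, $\rho_{\beta,\theta}(t)=e^{iHt}U_\theta^\dagger\rho_\beta U_\theta e^{-iHt}$. Then for all $t$, $$\langle\sqrt{\rho_\beta}|\sqrt{\rho_{\beta,\theta}(t)}\rangle=\operatorname{tr}\big(\sqrt{\rho_\beta}\sqrt{\rho_{\beta,\theta}(t)}\big)\ge e^{-\beta\|\Delta H\|/2},$$ where $\|\cdot\|$ is the operator norm.
   Context: For a density matrix $\rho$ on $\mathcal H_S$, its canonical purification is $|\sqrt\rho\rangle=(\sqrt\rho\otimes\mathbb 1_a)|\Phi\rangle\in\mathcal H_S\otimes\mathcal H_a$, where $\mathcal H_a\cong\mathcal H_S$ is an ancilla and $|\Phi\rangle=\sum_i|i\rangle_s|i\rangle_a$ is the unnormalized maximally entangled state; then $\langle\sqrt{\rho_1}|\sqrt{\rho_2}\rangle=\operatorname{tr}(\sqrt{\rho_1}\sqrt{\rho_2})$. *)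

From HB Require Import structures.
From mathcomp Require Import all_boot all_order all_algebra.
From mathcomp Require Import sesquilinear spectral.
From mathcomp Require Import classical_sets reals.
From mathcomp.analysis Require Import sequences exp trigo.
From mathcomp Require Import complex.

Set Implicit Arguments.
Unset Strict Implicit.
Unset Printing Implicit Defensive.

Import Order.TTheory GRing.Theory Num.Theory.
Local Open Scope ring_scope.
Local Open Scope classical_set_scope.

Definition dagger {R : realType} m n (A : 'M[R[i]]_(m, n)) : 'M[R[i]]_(n, m) :=
  map_mx (@Num.conj R[i]) (A ^T).


(* Functional calculus of a Hermitian (more generally normal) matrix via the
   spectral theorem A = P^dagger diag(lambda) P (spectralmx / spectral_diag):
   f(A) := P^dagger diag(f lambda_k) P, where f : R -> C is applied to the
   (real) eigenvalues. *)
Definition fcalc {R : realType} n (f : R -> R[i]) (A : 'M[R[i]]_n) : 'M[R[i]]_n :=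
  dagger (spectralmx A) *m
  diag_mx (\row_k f (complex.Re (spectral_diag A 0 k))) *m spectralmx A.

Definition mexpR {R : realType} n (s : R) (A : 'M[R[i]]_n) : 'M[R[i]]_n :=
  fcalc (fun x => ((expR (s * x))%:C)%C) A.

Definition mexpI {R : realType} n (t : R) (A : 'M[R[i]]_n) : 'M[R[i]]_n :=
  fcalc (fun x => Complex (cos (t * x)) (sin (t * x))) A.

Definition msqrt {R : realType} n (A : 'M[R[i]]_n) : 'M[R[i]]_n :=
  fcalc (fun x => ((Num.sqrt x)%:C)%C) A.

Definition vnorm {R : realType} n (v : 'cV[R[i]]_n) : R :=
  Num.sqrt (complex.Re ((dagger v *m v) 0 0)).

Definition opnorm {R : realType} n (A : 'M[R[i]]_n) : R :=
  sup [set r : R | exists v : 'cV[R[i]]_n, vnorm v = 1 /\ r = vnorm (A *m v)].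

Definition partition_fn {R : realType} n (beta : R) (H : 'M[R[i]]_n) : R[i] :=
  \tr (mexpR (- beta) H).

Definition gibbs {R : realType} n (beta : R) (H : 'M[R[i]]_n) : 'M[R[i]]_n :=
  (partition_fn beta H)^-1 *: mexpR (- beta) H.

Definition rho_theta {R : realType} n (beta t : R) (H U : 'M[R[i]]_n) : 'M[R[i]]_n :=
  mexpI t H *m dagger U *m gibbs beta H *m U *m mexpI (- t) H.

Definition deltaH {R : realType} n (H U : 'M[R[i]]_n) : 'M[R[i]]_n :=
  dagger U *m H *m U - H.

From HB Require Import structures.
From mathcomp Require Import all_boot all_order all_algebra.
From mathcomp Require Import sesquilinear spectral.
From mathcomp Require Import classical_sets reals.
From mathcomp.analysis Require Import sequences exp trigo.
From mathcomp Require Import complex.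
From mathcomp Require Import ring lra.
Import Order.TTheory GRing.Theory Num.Theory.
Local Open Scope ring_scope.
Set Implicit Arguments.
Unset Strict Implicit.
Unset Printing Implicit Defensive.

(* Diagonalize H = P^* L P with L = diag(lam).  Both square roots are then
   diagonal in unitary frames: sqrt(rho_beta) = P^* S P and
   sqrt(rho_{beta,theta}(t)) = Q^* S Q with Q = P U e^{-iHt} and
   S = diag(s), s_k^2 = e^{-beta lam_k} / Z.  Hence the overlap equals
   sum_{i,j} s_i s_j |W_ij|^2 for the unitary W = P Q^*, whose rows
   p_i = (|W_ij|^2)_j are probability vectors.  Since W L W^* = L + Y dH Y^*
   with Y = P e^{iHt} unitary, the mean energy of row i is
   sum_j p_ij lam_j <= lam_i + ||dH||.  Writing s_i s_j = e^{-beta lam_i/2}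
   e^{-beta lam_j/2} / Z, Jensen's inequality for exp in each row gives
   sum_j p_ij e^{-beta lam_j/2} >= e^{-beta (lam_i + ||dH||)/2}, and summing
   against e^{-beta lam_i/2} / Z leaves exactly e^{-beta ||dH||/2}. *)

Section UnitaryConjugation.
Variable C : numClosedFieldType.
Local Open Scope sesquilinear_scope.

Lemma unitarymx_tK n (Q : 'M[C]_n) : Q \is unitarymx -> Q^t* *m Q = 1%:M.
Proof. by move=> QU; rewrite -[Q^t*]mul1mx mulmxKtV. Qed.

Lemma diag_mx_trC n (d : 'rV[C]_n) : (diag_mx d)^t* = diag_mx (map_mx Num.conj d).
Proof. by rewrite tr_diag_mx map_diag_mx. Qed.

Lemma diag_unitarymx n (d : 'rV[C]_n) :
  (forall k, d 0 k * (d 0 k)^* = 1) -> diag_mx d \is unitarymx.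
Proof.
move=> dU; apply/unitarymxP; rewrite diag_mx_trC mulmx_diag.
by apply/matrixP => i j; rewrite !mxE dU.
Qed.

Lemma cauchy_schwarz_col n (u w : 'cV[C]_n) :
  `|(u^t* *m w) 0 0| <= sqrtC ((u^t* *m u) 0 0) * sqrtC ((w^t* *m w) 0 0).
Proof.
have dotE (x y : 'cV[C]_n) : (x^t* *m y) 0 0 = dotmx y^T x^T.
  by rewrite dotmxE !mxE; apply: eq_bigr => k _; rewrite !mxE mulrC.
by rewrite !dotE mulrC; exact: CauchySchwarz_sqrt.
Qed.

Lemma mulmx_trC_ge0 m n (A : 'M[C]_(m, n)) i : 0 <= (A *m A^t*) i i.
Proof. by rewrite mxE sumr_ge0 // => k _; rewrite !mxE mul_conjC_ge0. Qed.

Lemma trmxC_mul m n p (A : 'M[C]_(m, n)) (B : 'M[C]_(n, p)) :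
  (A *m B)^t* = B^t* *m A^t*.
Proof. by rewrite trmx_mul map_mxM. Qed.

Lemma unitary_frame_conj n (E U V D : 'M[C]_n) :
  E *m U^t* *m (V^t* *m D *m V) *m U *m E^t* =
  (V *m U *m E^t*)^t* *m D *m (V *m U *m E^t*).
Proof. by rewrite !trmxC_mul trmxCK !mulmxA. Qed.

Lemma diag_intertwine_map (g : C -> C) m n (W : 'M[C]_(m, n)) e d :
  W *m diag_mx e = diag_mx d *m W ->
  W *m diag_mx (map_mx g e) = diag_mx (map_mx g d) *m W.
Proof.
move=> /matrixP eW; apply/matrixP => i j; move: (eW i j).
rewrite !mul_mx_diag !mul_diag_mx !mxE.
have [-> _|Wij0 eWij] := eqVneq (W i j) 0; first by rewrite mul0r mulr0.
by rewrite [e 0 j](mulfI Wij0 (etrans eWij (mulrC _ _))) mulrC.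
Qed.

Lemma unitary_conj_diag_map (g : C -> C) n (P Q : 'M[C]_n) (e d : 'rV[C]_n) :
  P \is unitarymx -> Q \is unitarymx ->
  P^t* *m diag_mx e *m P = Q^t* *m diag_mx d *m Q ->
  P^t* *m diag_mx (map_mx g e) *m P = Q^t* *m diag_mx (map_mx g d) *m Q.
Proof.
move=> PU QU ePQ; set W := Q *m P^t*.
have eW : W *m diag_mx e = diag_mx d *m W.
  have := congr1 (fun M => Q *m M *m P^t*) ePQ.
  by rewrite /W /= !mulmxA (mulmxtVK _ PU) (unitarymxP QU) mul1mx.
have -> : P^t* = Q^t* *m W by rewrite /W mulmxA unitarymx_tK // mul1mx.
rewrite -(mulmxA _ W) (diag_intertwine_map g eW) /W.
by rewrite !mulmxA mulmxKtV.
Qed.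

Lemma spectral_decomp n (M : 'M[C]_n) : M \is normalmx ->
  M = (spectralmx M)^t* *m diag_mx (spectral_diag M) *m spectralmx M.
Proof.
by move=> /orthomx_spectralP {1}->; rewrite invmx_unitary // spectral_unitarymx.
Qed.

Lemma unitary_conj_diag_normal n (Q : 'M[C]_n) d : Q \is unitarymx ->
  Q^t* *m diag_mx d *m Q \is normalmx.
Proof.
move=> QU; apply/orthomx_spectral_subproof.
by exists (Q, d); rewrite //= invmx_unitary.
Qed.

Lemma mxtrace_conj_mul n (P Q D1 D2 : 'M[C]_n) :
  \tr ((P^t* *m D1 *m P) *m (Q^t* *m D2 *m Q)) =
  \tr (D1 *m (P *m Q^t*) *m D2 *m (P *m Q^t*)^t*).
Proof. by rewrite !trmxC_mul trmxCK -!mulmxA mxtrace_mulC !mulmxA. Qed.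

Lemma mxtrace_diag_conj n (a b : 'rV[C]_n) (W : 'M[C]_n) :
  \tr (diag_mx a *m W *m diag_mx b *m W^t*) =
  \sum_i \sum_j a 0 i * b 0 j * (W i j * (W i j)^*).
Proof.
rewrite mul_diag_mx mul_mx_diag /mxtrace; apply: eq_bigr => i _.
by rewrite mxE; apply: eq_bigr => j _; rewrite !mxE; ring.
Qed.

Lemma unitarymx_row_norm n (W : 'M[C]_n) i : W \is unitarymx ->
  \sum_j W i j * (W i j)^* = 1.
Proof.
move=> /unitarymxP /matrixP /(_ i i); rewrite !mxE eqxx mulr1n => <-.
by apply: eq_bigr => j _; rewrite !mxE.
Qed.

Lemma conj_diag_mx_diagE n (W : 'M[C]_n) (l : 'rV[C]_n) i :
  (W *m diag_mx l *m W^t*) i i = \sum_j W i j * (W i j)^* * l 0 j.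
Proof.
by rewrite mul_mx_diag mxE; apply: eq_bigr => j _; rewrite !mxE mulrAC.
Qed.

Lemma unimodular_diag_conj n (P H : 'M[C]_n) (l a : 'rV[C]_n) :
  P \is unitarymx -> H = P^t* *m diag_mx l *m P ->
  (forall k, a 0 k * (a 0 k)^* = 1) ->
  let Y := P *m (P^t* *m diag_mx a *m P) in Y *m H *m Y^t* = diag_mx l.
Proof.
move=> PU eH aU Y.
have eY : Y = diag_mx a *m P by rewrite /Y !mulmxA (unitarymxP PU) mul1mx.
rewrite eY eH !trmxC_mul !mulmxA -(mulmxA _ P) (unitarymxP PU) mulmx1.
rewrite mulmxtVK // diag_mxC -mulmxA.
by rewrite (unitarymxP (diag_unitarymx aU)) mulmx1.
Qed.

Lemma conj_diag_deltaH n (P U H Y : 'M[C]_n) (l : 'rV[C]_n) :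
  H = P^t* *m diag_mx l *m P -> Y *m H *m Y^t* = diag_mx l ->
  let W := Y *m U^t* *m P^t* in
  W *m diag_mx l *m W^t* = diag_mx l + Y *m (U^t* *m H *m U - H) *m Y^t*.
Proof.
move=> eH eYH W.
rewrite mulmxBr mulmxBl eYH addrC subrK /W eH.
by rewrite !trmxC_mul !trmxCK !mulmxA.
Qed.

End UnitaryConjugation.

Section OperatorNorm.
Variable R : realType.
Local Open Scope sesquilinear_scope.
Local Open Scope complex_scope.

Lemma sqrtC_real (r : R) : 0 <= r -> sqrtC r%:C = (Num.sqrt r)%:C.
Proof.
by move=> r0; rewrite -{1}(sqr_sqrtr r0) rmorphXn sqrCK // ler0c sqrtr_ge0.
Qed.

Lemma vnorm_sqrtC n (u : 'cV[R[i]]_n) : (vnorm u)%:C = sqrtC ((u^t* *m u) 0 0).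
Proof.
have u2_ge0 : 0 <= (u^t* *m u) 0 0 by rewrite -[u in _ *m u]trmxCK mulmx_trC_ge0.
rewrite -(RRe_real (ger0_real u2_ge0)) sqrtC_real //.
by rewrite -ler0c RRe_real ?ger0_real.
Qed.

Lemma vnorm_eq1 n (u : 'cV[R[i]]_n) : (u^t* *m u) 0 0 = 1 -> vnorm u = 1.
Proof. by move=> u1; apply: (@complexI R); rewrite vnorm_sqrtC u1 sqrtC1. Qed.

Lemma vnorm_mul_sqr_le n (A : 'M[R[i]]_n) w : vnorm w = 1 ->
  (vnorm (A *m w))%:C ^+ 2 <= \tr (A *m A^t*).
Proof.
move=> w1; rewrite vnorm_sqrtC sqrtCK mxE /mxtrace; apply: ler_sum => k _.
have -> : (A *m A^t*) k k = (row k A *m (row k A)^t*) 0 0.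
  by rewrite !mxE; apply: eq_bigr => j _; rewrite !mxE.
have := cauchy_schwarz_col ((row k A)^t*) w.
rewrite -(vnorm_sqrtC w) w1 rmorph1 mulr1 trmxCK -row_mul mxE => cs.
have -> : (A *m w)^t* 0 k = ((A *m w) k 0)^* by rewrite !mxE.
by rewrite -normCKC -[X in _ <= X]sqrtCK ler_sqr ?nnegrE ?sqrtC_ge0 ?mulmx_trC_ge0.
Qed.

Lemma vnorm_mul_le_opnorm n (A : 'M[R[i]]_n) v : vnorm v = 1 ->
  vnorm (A *m v) <= opnorm A.
Proof.
move=> v1; apply: sup_upper_bound; last by exists v.
split; first by exists (vnorm (A *m v)), v.
(* [sup] is junk on unbounded sets; the Frobenius norm bounds this one. *)
exists (1 + complex.Re (\tr (A *m A^t*))) => _ [w [w1 ->]].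
have := vnorm_mul_sqr_le A w1; rewrite lecE expr2 /= => /andP[_ frob].
have : 0 <= (vnorm (A *m w) - 1) ^+ 2 by rewrite sqr_ge0.
nra.
Qed.

Lemma Re_quad_le_opnorm n (M : 'M[R[i]]_n) v : vnorm v = 1 ->
  complex.Re ((v^t* *m M *m v) 0 0) <= opnorm M.
Proof.
move=> v1; apply: le_trans (vnorm_mul_le_opnorm M v1).
have := cauchy_schwarz_col v (M *m v).
rewrite -!vnorm_sqrtC v1 mul1r mulmxA => cs.
rewrite -lecR (le_trans _ cs) // (le_trans _ (normc_ge_Re _)) // lecR.
exact: real_ler_norm (num_real _).
Qed.

Lemma unitary_conj_Re_le_opnorm n (Y D : 'M[R[i]]_n) i : Y \is unitarymx ->
  complex.Re ((Y *m D *m Y^t*) i i) <= opnorm D.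
Proof.
move=> YU; set v := (row i Y)^t*.
have -> : (Y *m D *m Y^t*) i i = (v^t* *m D *m v) 0 0.
  rewrite /v trmxCK !mxE; apply: eq_bigr => k _; rewrite !mxE; congr (_ * _).
  by apply: eq_bigr => l _; rewrite !mxE.
apply/Re_quad_le_opnorm/vnorm_eq1.
rewrite /v trmxCK -(unitarymx_row_norm i YU) mxE.
by apply: eq_bigr => j _; rewrite !mxE.
Qed.

End OperatorNorm.

Section ExpR.
Variable R : realType.

Lemma sqrtr_expR (a : R) : Num.sqrt (expR a) = expR (a / 2).
Proof.
by rewrite {1}[a]splitr expRD -expr2 sqrtr_sqr ger0_norm ?expR_ge0.
Qed.

Lemma expR_convex_sum (I : finType) (p x : I -> R) :
  (forall j, 0 <= p j) -> \sum_j p j = 1 ->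
  expR (\sum_j p j * x j) <= \sum_j p j * expR (x j).
Proof.
move=> p_ge0 p1; set m := \sum_j p j * x j.
have tangent j : p j * (expR m * (1 + (x j - m))) <= p j * expR (x j).
  have -> : expR (x j) = expR m * expR (x j - m) by rewrite -expRD addrC subrK.
  by do 2!apply: ler_wpM2l => //; [exact: expR_ge0 | exact: expR_ge1Dx].
apply: le_trans (ler_sum _ (fun j _ => tangent j)).
have -> : \sum_j p j * (expR m * (1 + (x j - m))) =
          expR m * \sum_j (p j + (p j * x j - m * p j)).
  by rewrite mulr_sumr; apply: eq_bigr => j _; ring.
by rewrite !big_split /= sumrN -mulr_sumr p1 -/m mulr1 subrr addr0 mulr1.
Qed.

End ExpR.

Section GibbsOverlap.
Variables (R : realType) (n : nat) (beta : R) (lam : 'I_n -> R).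
Hypotheses (n_gt0 : (0 < n)%N) (beta_ge0 : 0 <= beta).
Let Z := \sum_k expR (- beta * lam k).

Lemma gibbs_row_bound i (p : 'I_n -> R) N :
  (forall j, 0 <= p j) -> \sum_j p j = 1 -> \sum_j p j * lam j <= lam i + N ->
  expR (- beta * lam i / 2) * expR (- (beta * N) / 2) <=
  \sum_j p j * expR (- beta * lam j / 2).
Proof.
move=> p_ge0 p1 p_mean; rewrite -expRD.
apply: le_trans (expR_convex_sum _ p_ge0 p1); rewrite ler_expR.
have -> : \sum_j p j * (- beta * lam j / 2) = - (beta / 2) * \sum_j p j * lam j.
  by rewrite mulr_sumr; apply: eq_bigr => j _; ring.
have := mulr_ge0 beta_ge0 (eqbRL (subr_ge0 _ _) p_mean); lra.
Qed.

Lemma partition_gt0 : 0 < Z.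
Proof.
rewrite /Z (bigD1 (Ordinal n_gt0)) //= ltr_wpDr ?expR_gt0 //.
by rewrite sumr_ge0 // => k _; rewrite expR_ge0.
Qed.

Lemma sqrt_gibbs_weight k :
  Num.sqrt (expR (- beta * lam k) / Z) = expR (- beta * lam k / 2) / Num.sqrt Z.
Proof.
by rewrite sqrtrM ?expR_ge0 // sqrtrV ?sqrtr_expR // ltW // partition_gt0.
Qed.

Lemma gibbs_overlap_ge (p : 'I_n -> 'I_n -> R) N :
  (forall i j, 0 <= p i j) -> (forall i, \sum_j p i j = 1) ->
  (forall i, \sum_j p i j * lam j <= lam i + N) ->
  expR (- (beta * N) / 2) <=
  \sum_i \sum_j Num.sqrt (expR (- beta * lam i) / Z) *
                Num.sqrt (expR (- beta * lam j) / Z) * p i j.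
Proof.
move=> p_ge0 p1 p_mean; set c := expR (- (beta * N) / 2).
have Z_gt0 := partition_gt0.
have row i : expR (- beta * lam i) / Z * c <=
    \sum_j Num.sqrt (expR (- beta * lam i) / Z) *
           Num.sqrt (expR (- beta * lam j) / Z) * p i j.
  under eq_bigr => j _.
    rewrite !sqrt_gibbs_weight mulrACA -invfM -expr2 sqr_sqrtr ?(ltW Z_gt0) //.
    rewrite (_ : _ * _ * p i j = expR (- beta * lam i / 2) / Z *
                                 (p i j * expR (- beta * lam j / 2))); last by ring.
    over.
  have -> : expR (- beta * lam i) = expR (- beta * lam i / 2) ^+ 2.
    by rewrite -sqrtr_expR sqr_sqrtr ?expR_ge0.
  rewrite -mulr_sumr (_ : _ ^+ 2 / Z * c = expR (- beta * lam i / 2) / Z *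
                                          (expR (- beta * lam i / 2) * c)); last by ring.
  apply: ler_wpM2l; first by rewrite divr_ge0 ?expR_ge0 ?ltW.
  exact: gibbs_row_bound.
apply: le_trans (ler_sum _ (fun i _ => row i)).
by rewrite -!mulr_suml -/Z mulfV ?mul1r ?gt_eqF.
Qed.

End GibbsOverlap.

Section ThermalOverlap.
Variable R : realType.
Local Open Scope sesquilinear_scope.
Local Open Scope complex_scope.

Definition sqrt_gibbs_spectrum n (beta : R) (lam : 'I_n -> R) : 'rV[R[i]]_n :=
  \row_k (Num.sqrt (expR (- beta * lam k) / \sum_j expR (- beta * lam j)))%:C.

Lemma thermal_overlap_ge n (beta : R) (lam : 'I_n -> R) (W Y D : 'M[R[i]]_n) :
  (0 < n)%N -> 0 <= beta -> W \is unitarymx -> Y \is unitarymx ->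
  W *m diag_mx (\row_k (lam k)%:C) *m W^t* =
    diag_mx (\row_k (lam k)%:C) + Y *m D *m Y^t* ->
  (expR (- (beta * opnorm D) / 2))%:C <=
  \tr (diag_mx (sqrt_gibbs_spectrum beta lam) *m W *m
       diag_mx (sqrt_gibbs_spectrum beta lam) *m W^t*).
Proof.
move=> n_gt0 beta_ge0 WU YU eW.
pose p i j := complex.Re (W i j * (W i j)^*).
have pE i j : W i j * (W i j)^* = (p i j)%:C.
  by rewrite RRe_real // ger0_real // mul_conjC_ge0.
rewrite mxtrace_diag_conj.
under eq_bigr => i _ do under eq_bigr => j _ do rewrite !mxE pE -!rmorphM.
rewrite -(eq_bigr _ (fun i _ => rmorph_sum _ _ _ _)) -rmorph_sum lecR.
apply: gibbs_overlap_ge => // [i j | i | i].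
- by rewrite -ler0c -pE mul_conjC_ge0.
- apply: (@complexI R); rewrite rmorph_sum rmorph1 -(unitarymx_row_norm i WU).
  by apply: eq_bigr => j _; rewrite pE.
- have := congr1 (fun M : 'M[R[i]]_n => complex.Re (M i i)) eW.
  rewrite /= conj_diag_mx_diagE mxE [diag_mx _ i i]mxE eqxx mulr1n mxE raddfD /=.
  under eq_bigr => j _ do rewrite pE mxE -rmorphM.
  rewrite -rmorph_sum /= => ->.
  by rewrite lerD2l unitary_conj_Re_le_opnorm.
Qed.

End ThermalOverlap.

Section FunctionalCalculus.
Variable R : realType.
Local Open Scope sesquilinear_scope.
Local Open Scope complex_scope.

Lemma cis_unimodular (x : R) :
  Complex (cos x) (sin x) * (Complex (cos x) (sin x))^* = 1.
Proof.
have := cos2Dsin2 x; rewrite !expr2 => cs1.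
by apply/eqP; rewrite eq_complex /=; apply/andP; split; apply/eqP; lra.
Qed.

Lemma fcalcE n (f : R -> R[i]) (M Q : 'M[R[i]]_n) (d : 'rV[R[i]]_n) :
  Q \is unitarymx -> M = Q^t* *m diag_mx d *m Q ->
  fcalc f M = Q^t* *m diag_mx (\row_k f (complex.Re (d 0 k))) *m Q.
Proof.
move=> QU eM.
have M_normal : M \is normalmx by rewrite eM; exact: unitary_conj_diag_normal.
have rowE (e : 'rV[R[i]]_n) :
    \row_k f (complex.Re (e 0 k)) = map_mx (f \o @complex.Re R) e.
  by apply/rowP => k; rewrite !mxE.
rewrite /fcalc !rowE; apply: unitary_conj_diag_map (spectral_unitarymx M) QU _.
by rewrite -(spectral_decomp M_normal).
Qed.

Lemma fcalc_real_diag n (f : R -> R[i]) (Q : 'M[R[i]]_n) (x : 'I_n -> R) :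
  Q \is unitarymx ->
  fcalc f (Q^t* *m diag_mx (\row_k (x k)%:C) *m Q) =
  Q^t* *m diag_mx (\row_k f (x k)) *m Q.
Proof.
move=> QU; rewrite (fcalcE f QU (erefl _)).
by apply: (congr1 (fun d => Q^t* *m diag_mx d *m Q)); apply/rowP => k; rewrite !mxE.
Qed.

Lemma hermitian_spectral_decomp n (H : 'M[R[i]]_n) : H \is hermsymmx ->
  H = (spectralmx H)^t* *m
      diag_mx (\row_k (complex.Re (spectral_diag H 0 k))%:C) *m spectralmx H.
Proof.
move=> hH; rewrite [H in LHS](spectral_decomp (hermitian_normalmx hH)).
apply: (congr1 (fun d => (spectralmx H)^t* *m diag_mx d *m spectralmx H)).
apply/rowP => k; rewrite mxE RRe_real //.
by move/mxOverP: (hermitian_spectral_diag_real hH); apply.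
Qed.

End FunctionalCalculus.

Section ThermalState.
Variables (R : realType) (n : nat) (H : 'M[R[i]]_n) (beta : R).
Hypothesis hH : H \is hermsymmx.
Local Open Scope sesquilinear_scope.
Local Open Scope complex_scope.
Local Notation P := (spectralmx H).
Local Notation lam := (fun k => complex.Re (spectral_diag H 0 k)).
Local Notation gibbs_spectrum :=
  (\row_k (expR (- beta * lam k) / \sum_j expR (- beta * lam j))%:C).

Lemma gibbsE : gibbs beta H = P^t* *m diag_mx gibbs_spectrum *m P.
Proof.
have trE : partition_fn beta H = (\sum_j expR (- beta * lam j))%:C.
  rewrite /partition_fn /mexpR /fcalc mxtrace_mulC mulmxA.
  rewrite (unitarymxP (spectral_unitarymx _)) mul1mx mxtrace_diag rmorph_sum.
  by apply: eq_bigr => k _; rewrite mxE.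
rewrite /gibbs trE scalemxAl scalemxAr; apply: (congr1 (fun D => P^t* *m D *m P)).
apply/matrixP => i j; rewrite !mxE mulrnAr; congr (_ *+ _).
by rewrite rmorphM fmorphV mulrC.
Qed.

Lemma msqrt_gibbs :
  msqrt (gibbs beta H) = P^t* *m diag_mx (sqrt_gibbs_spectrum beta lam) *m P.
Proof. by rewrite gibbsE /msqrt fcalc_real_diag ?spectral_unitarymx. Qed.

Lemma mexpI_unitary t : mexpI t H \is unitarymx.
Proof.
rewrite /mexpI /fcalc !mul_unitarymx ?trmxC_unitary ?spectral_unitarymx //.
by apply: diag_unitarymx => k; rewrite mxE cis_unimodular.
Qed.

Lemma mexpIN t : mexpI (- t) H = (mexpI t H)^t*.
Proof.
rewrite /mexpI /fcalc !trmxC_mul trmxCK diag_mx_trC mulmxA.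
apply: (congr1 (fun d => P^t* *m diag_mx d *m P)).
by apply/rowP => k; rewrite !mxE /= mulNr cosN sinN.
Qed.

Lemma rho_thetaE t U :
  rho_theta beta t H U =
  (P *m U *m (mexpI t H)^t*)^t* *m diag_mx gibbs_spectrum *m (P *m U *m (mexpI t H)^t*).
Proof. by rewrite /rho_theta /dagger mexpIN gibbsE unitary_frame_conj. Qed.

Lemma rho_theta_frame_unitary t U : U \is unitarymx ->
  P *m U *m (mexpI t H)^t* \is unitarymx.
Proof.
move=> UU; apply: mul_unitarymx; first exact: mul_unitarymx (spectral_unitarymx H) UU.
by rewrite trmxC_unitary mexpI_unitary.
Qed.

Lemma msqrt_rho_theta t U : U \is unitarymx ->
  msqrt (rho_theta beta t H U) =
  (P *m U *m (mexpI t H)^t*)^t* *m diag_mx (sqrt_gibbs_spectrum beta lam) *m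
  (P *m U *m (mexpI t H)^t*).
Proof.
by move=> UU; rewrite rho_thetaE /msqrt fcalc_real_diag ?rho_theta_frame_unitary.
Qed.

Lemma eigenframe_deltaH t U :
  let W := P *m (P *m U *m (mexpI t H)^t*)^t* in
  W *m diag_mx (\row_k (lam k)%:C) *m W^t* =
  diag_mx (\row_k (lam k)%:C) + (P *m mexpI t H) *m deltaH H U *m (P *m mexpI t H)^t*.
Proof.
have eH := hermitian_spectral_decomp hH.
have eYH :
    (P *m mexpI t H) *m H *m (P *m mexpI t H)^t* = diag_mx (\row_k (lam k)%:C).
  apply: (unimodular_diag_conj (spectral_unitarymx _) eH) => k.
  by rewrite mxE cis_unimodular.
rewrite /deltaH /dagger; move: (mexpI t H) eYH => E eYH.
have -> : P *m (P *m U *m E^t*)^t* = P *m E *m U^t* *m P^t*.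
  by rewrite !trmxC_mul !trmxCK !mulmxA.
exact: conj_diag_deltaH.
Qed.

End ThermalState.

Theorem proposition2 (R : realType) (n : nat) (H U : 'M[R[i]]_n) (beta : R) :
  (0 < n)%N -> H \is hermsymmx -> U \is unitarymx -> 0 < beta ->
  forall t : R,
    ((expR (- (beta * opnorm (deltaH H U)) / 2))%:C)%C
      <= \tr (msqrt (gibbs beta H) *m msqrt (rho_theta beta t H U)).
Proof.
move=> n_gt0 hH hU beta_gt0 t.
rewrite msqrt_gibbs (msqrt_rho_theta _ _ _ hU) mxtrace_conj_mul.
apply: (thermal_overlap_ge n_gt0 (ltW beta_gt0) _ _ (eigenframe_deltaH hH t U)).
  apply: mul_unitarymx (spectral_unitarymx H) _.
  by rewrite trmxC_unitary rho_theta_frame_unitary.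
exact: mul_unitarymx (spectral_unitarymx H) (mexpI_unitary H t).
Qed.
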